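(* Let $q$ be a prime power and $1\le k\le n-1$. A non-empty set of affine $k$-spaces of $\mathrm{AG}(n,q)$ all contained in a fixed hyperplane of $\mathrm{AG}(n,q)$ is not a Cameron-Liebler $k$-set of $\mathrm{AG}(n,q)$.
   Context: $\mathrm{AG}(n,q)$ is $\mathrm{PG}(n,q)$ with a hyperplane $\pi_\infty$ removed; affine points are points outside $\pi_\infty$, affine $k$-spaces (resp. hyperplanes) are $k$-dimensional (resp. $(n-1)$-dimensional) projective subspaces not contained in $\pi_\infty$. With $A_n$ the incidence matrix of affine points versus affine $k$-spaces, a set of affine $k$-spaces is a Cameron-Liebler $k$-set of $\mathrm{AG}(n,q)$ if its characteristic vector lies in the real row space $\mathrm{Im}(A_n^T)$. *)

From mathcomp Require Import all_boot all_order all_algebra all_field.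
From mathcomp Require Import reals.
Set Implicit Arguments. Unset Strict Implicit. Unset Printing Implicit Defensive.
Import GRing.Theory Num.Theory.
Local Open Scope ring_scope.

(* AG(n,q) is modelled as the vector space 'rV[F]_n over a finite field F with
   #|F| = q (so q is automatically a prime power).  Affine points are the row
   vectors; an affine k-space is a coset  a + U  of a k-dimensional linear
   subspace U (given as the row space of a square matrix of rank k). *)

Definition affine_space (F : finFieldType) (n k : nat) (S : {set 'rV[F]_n}) : bool :=
  [exists U : 'M[F]_n, exists a : 'rV[F]_n,
     (\rank U == k) && (S == [set x : 'rV[F]_n | (x - a <= U)%MS])].

Definition affine_hyperplane (F : finFieldType) (n : nat) (H : {set 'rV[F]_n}) : bool :=
  affine_space n.-1 H.

(* incidence matrix A_n: rows = affine points, columns = affine k-spaces *)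
Definition incidence (R : realType) (F : finFieldType) (n : nat)
  (p : 'rV[F]_n) (L : {set 'rV[F]_n}) : R := if p \in L then 1 else 0.

Definition charvec (R : realType) (F : finFieldType) (n : nat)
  (S : {set {set 'rV[F]_n}}) (L : {set 'rV[F]_n}) : R := if L \in S then 1 else 0.

(* S is a Cameron-Liebler k-set: its characteristic vector lies in the real
   row space Im(A_n^T) of A_n, i.e. it is a real linear combination of the rows
   of A_n (the rows being indexed by the affine points). *)
Definition cameron_liebler (R : realType) (F : finFieldType) (n k : nat)
  (S : {set {set 'rV[F]_n}}) : Prop :=
  exists c : 'rV[F]_n -> R,
    forall L : {set 'rV[F]_n}, affine_space k L ->
      charvec R S L = \sum_(p : 'rV[F]_n) c p * incidence R p L.

From mathcomp Require Import all_boot all_order all_algebra all_field zify.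
From mathcomp Require Import reals.
Set Implicit Arguments. Unset Strict Implicit. Unset Printing Implicit Defensive.
Import Order.TTheory GRing.Theory Num.Theory.
Local Open Scope ring_scope.

(* Summing the defining identity of a Cameron-Liebler set over all translates
   a + U of a fixed k-dimensional direction U (each coset occurs |U| times)
   shows that the number of members of S parallel to U equals the sum of the
   coefficients, independently of U.  A k-space inside the hyperplane b + W has
   its direction inside W, so no member of S is parallel to a k-dimensional
   direction not contained in W: the coefficient sum is 0, contradicting the
   count for the direction of any member of S. *)

Section AffineSpaces.

Variables (F : finFieldType) (n : nat).
Implicit Types (U W : 'M[F]_n) (a b : 'rV[F]_n) (L : {set 'rV[F]_n}).

Definition mxcoset U a : {set 'rV[F]_n} := [set x | (x - a <= U)%MS].

Lemma affine_spaceP k L :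
  reflect (exists U : 'M[F]_n, exists2 a : 'rV[F]_n, \rank U = k & L = mxcoset U a)
          (affine_space k L).
Proof.
apply: (iffP existsP) => [[U /existsP [a /andP [/eqP rU /eqP ->]]] | [U [a rU ->]]].
  by exists U, a.
by exists U; apply/existsP; exists a; rewrite rU !eqxx.
Qed.

Lemma mxcoset_refl U a : a \in mxcoset U a.
Proof. by rewrite inE subrr sub0mx. Qed.

Lemma mxcoset_subset_sub U W a b :
  mxcoset U a \subset mxcoset W b -> (U <= W)%MS.
Proof.
move/subsetP=> sub; apply/rV_subP => u uU.
have /sub : a \in mxcoset U a := mxcoset_refl U a.
have /sub : a + u \in mxcoset U a by rewrite inE addrAC subrr add0r.
rewrite !inE => aub ab.
have -> : u = (a + u - b) - (a - b) by rewrite opprB addrA subrK [a + u]addrC addrK.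
by rewrite addmx_sub ?eqmx_opp.
Qed.

Lemma exists_rank_not_submx W k :
  (0 < k <= (\rank W).+1)%N -> (\rank W < n)%N ->
  exists2 U : 'M[F]_n, \rank U = k & ~~ (U <= W)%MS.
Proof.
move=> /andP [k_gt0 k_le] W_lt.
have rWC : \rank (W^C)%MS = (n - \rank W)%N by rewrite mxrank_compl.
set V := ((pid_mx 1 : 'M[F]_(n, \rank W^C)) *m row_base W^C)%MS.
set K := (pid_mx k.-1 : 'M[F]_(n, \rank W)) *m row_base W.
have VWC : (V <= W^C)%MS by rewrite (submx_trans (submxMl _ _)) ?eq_row_base.
have KW : (K <= W)%MS by rewrite (submx_trans (submxMl _ _)) ?eq_row_base.
have rV : \rank V = 1%N by rewrite mxrankMfree ?row_base_free // rank_pid_mx; lia.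
have VW0 : (V :&: W)%MS = 0.
  by apply/eqP; rewrite -submx0 -(capmx_compl W) capmxC capmxS.
exists (V + K)%MS.
  rewrite mxrank_disjoint_sum; last first.
    by apply/eqP; rewrite -submx0 -VW0 capmxS.
  by rewrite rV mxrankMfree ?row_base_free // rank_pid_mx; lia.
apply: contraTN isT => /(submx_trans (addsmxSl V K)) VW.
by move: rV; rewrite -(capmx_idPl VW) VW0 mxrank0.
Qed.

Lemma card_submx_gt0 (R : numDomainType) U :
  0 < #|[set a : 'rV[F]_n | (a <= U)%MS]|%:R :> R.
Proof. by rewrite ltr0n card_gt0; apply/set0Pn; exists 0; rewrite inE sub0mx. Qed.

Lemma sum_mxcoset_incidence (R : realType) U (c : 'rV[F]_n -> R) :
  \sum_(a : 'rV[F]_n) \sum_(p : 'rV[F]_n) c p * incidence R p (mxcoset U a)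
  = #|[set a : 'rV[F]_n | (a <= U)%MS]|%:R * \sum_(p : 'rV[F]_n) c p.
Proof.
rewrite exchange_big mulr_sumr; apply: eq_bigr => p _.
rewrite -mulr_sumr mulrC; congr (_ * _).
have inv : involutive (fun a : 'rV[F]_n => p - a) by move=> a; rewrite opprB addrC subrK.
rewrite (reindex_inj (inv_inj inv)) -sum1_card natr_sum [RHS]big_mkcond /=.
by apply: eq_bigr => a _; rewrite /incidence !inE opprB addrC subrK.
Qed.

Lemma cameron_liebler_parallel_count (R : realType) k (S : {set {set 'rV[F]_n}}) :
  cameron_liebler R k S ->
  exists s : R, forall U, \rank U = k ->
    \sum_(a : 'rV[F]_n) charvec R S (mxcoset U a)
    = #|[set a : 'rV[F]_n | (a <= U)%MS]|%:R * s.
Proof.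
move=> [c CL]; exists (\sum_p c p) => U rU.
rewrite -sum_mxcoset_incidence; apply: eq_bigr => a _.
by apply: CL; apply/affine_spaceP; exists U, a.
Qed.

End AffineSpaces.

Theorem lemma6p2 (R : realType) (F : finFieldType) (n k : nat)
  (hk1 : (1 <= k)%N) (hkn : (k <= n - 1)%N)
  (S : {set {set 'rV[F]_n}})
  (hS : forall L, L \in S -> affine_space k L)
  (hne : S != set0)
  (H : {set 'rV[F]_n}) (hH : affine_hyperplane H)
  (hSH : forall L, L \in S -> L \subset H) :
  ~ cameron_liebler R k S.
Proof.
move=> /cameron_liebler_parallel_count [s parallel_count].
case/set0Pn: hne => L0 L0S.
have /affine_spaceP [U0 [a0 rU0 defL0]] := hS _ L0S.
have /affine_spaceP [W [b rW defH]] := hH.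
have [U1 rU1 U1W] : exists2 U1 : 'M[F]_n, \rank U1 = k & ~~ (U1 <= W)%MS.
  by apply: exists_rank_not_submx; rewrite rW; lia.
have s0 : s = 0.
  apply/eqP; rewrite -(mulrI_eq0 _ (lregP (lt0r_neq0 (card_submx_gt0 R U1)))).
  rewrite -parallel_count // big1 // => a _; rewrite /charvec ifF //.
  apply: contraNF U1W => /hSH; rewrite defH; exact: mxcoset_subset_sub.
have : 0 < \sum_a charvec R S (mxcoset U0 a).
  rewrite (bigD1 a0) //= -defL0 /charvec L0S ltr_pwDl // sumr_ge0 // => a _.
  by case: ifP.
by rewrite parallel_count // s0 mulr0 ltxx.
Qed.
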